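(* Let $f:R\to S$ be a faithfully flat ring homomorphism. If $S$ is Cohen-Macaulay, then so is $R$.
   Context: All rings are commutative with identity. For $x\in R$ let $C(x)$ be the complex $0\to R\to R_x\to 0$ ($R$ in degree $0$, natural localization map); for a finite sequence $\mathbf x=x_1,\dots,x_\ell$ put $C(\mathbf x)=C(x_1)\otimes_R\cdots\otimes_R C(x_\ell)$ and let $H^i_{\mathbf x}(M)$ be the $i$th cohomology of $C(\mathbf x)\otimes_R M$; $\ell(\mathbf x)=\ell$. Let $K(x)$ be $0\to R\xrightarrow{x}R\to 0$ (degrees $1,0$), $K(\mathbf x)=K(x_1)\otimes\cdots\otimes K(x_\ell)$, $H_i(\mathbf x)$ its homology. For $m\ge n$ the chain map $K(\mathbf x^m)\to K(\mathbf x^n)$ ($\mathbf x^m=x_1^m,\dots,x_\ell^m$) is the tensor product of the maps $K(x_i^m)\to K(x_i^n)$ given by multiplication by $x_i^{m-n}$ in degree $1$ and identity in degree $0$. $\mathbf x$ is weakly proregular if for every $n$ there is $m\ge n$ with $H_i(\mathbf x^m)\to H_i(\mathbf x^n)$ zero for all $i\ge1$. $\mathbf x$ is a parameter sequence on $R$ if it is weakly proregular, $(\mathbf x)R\neq R$, and $H^{\ell(\mathbf x)}_{\mathbf x}(R)_p\neq0$ for every prime $p\supseteq(\mathbf x)R$ (the empty sequence is a parameter sequence). It is a strong parameter sequence if $x_1,\dots,x_i$ is a parameter sequence for each $i=1,\dots,\ell(\mathbf x)$. A regular sequence on $M$: each $x_i$ is a non-zero-divisor on $M/(x_1,\dots,x_{i-1})M$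 and $M\neq(\mathbf x)M$. A ring $R$ is Cohen-Macaulay if every strong parameter sequence on $R$ is a regular sequence on $R$. *)

From HB Require Import structures.
From mathcomp Require Import all_boot all_order all_algebra.
Set Implicit Arguments. Unset Strict Implicit. Unset Printing Implicit Defensive.
Import Order.TTheory GRing.Theory Num.Theory.
Local Open Scope ring_scope.

Section Defs.
Variable R : comPzRingType.

Definition in_ideal (s : seq R) (a : R) : Prop :=
  exists c : nat -> R, a = \sum_(i < size s) c i * s`_i.

Definition prime_ideal (P : R -> Prop) : Prop :=
  [/\ P 0, (forall a b, P a -> P b -> P (a + b)),
      (forall r a, P a -> P (r * a)), ~ P 1 &
      (forall a b, P (a * b) -> P a \/ P b)].

(* ---------- Koszul complex K(x) ----------
   K(x) = K(x_1) (x) ... (x) K(x_l) has basis e_I, I a subset of {0..l-1},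
   e_I in degree #|I|.  A chain is a function c : {set 'I_l} -> R (coefficient
   of e_I); it is homogeneous of degree i if supported on #|I| = i.
   Differential: d(e_I) = sum_{j in I} (-1)^{#{k in I, k<j}} x_j e_{I\{j}},
   i.e. (d c)(J) = sum_{j notin J} (-1)^{#{k in J, k<j}} x_j c(J u {j}). *)
Definition homog (l i : nat) (c : {set 'I_l} -> R) : Prop :=
  forall I : {set 'I_l}, #|I| != i -> c I = 0.

Definition kdiff (l : nat) (x : seq R) (c : {set 'I_l} -> R) (J : {set 'I_l}) : R :=
  \sum_(j : 'I_l | j \notin J) (-1) ^+ #|[set k in J | (k < j)%N]| * x`_j * c (j |: J).

(* the comparison map K(x^m) -> K(x^n) (k = m - n): e_I |-> (prod_{j in I} x_j^k) e_I *)
Definition kmap (l : nat) (x : seq R) (k : nat) (c : {set 'I_l} -> R) (I : {set 'I_l}) : R :=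
  (\prod_(j in I) x`_j ^+ k) * c I.

Definition spow (x : seq R) (m : nat) : seq R := [seq a ^+ m | a <- x].

(* H_i(x^m) -> H_i(x^n) is zero for all i >= 1: every i-cycle of K(x^m) is mapped
   to an i-boundary of K(x^n). *)
Definition weakly_proregular (x : seq R) : Prop :=
  forall n : nat, exists m : nat, (n <= m)%N /\
    forall i : nat, (1 <= i)%N ->
    forall z : {set 'I_(size x)} -> R, homog i z ->
      (forall J, kdiff (spow x m) z J = 0) ->
      exists w : {set 'I_(size x)} -> R, homog i.+1 w /\
        forall J, kdiff (spow x n) w J = kmap x (m - n) z J.

(* ---------- top Cech cohomology H^l_x(R) ----------
   In degree l, C(x) (x) R = R_{x_1} (x) ... (x) R_{x_l} = R_y with y = x_1...x_l,
   and in degree l-1 it is the direct sum of the R_{y_j}, y_j = prod_{i<>j} x_i.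
   H^l_x(R) is the cokernel; an element b/y_j^k maps to b x_j^k / y^k.
   Elements of H^l_x(R) are represented by classes of a/y^n; the class is zero
   iff a/y^n = (sum_j b_j x_j^k)/y^k in R_y for some k, b, i.e. iff
   y^t (a y^k - (sum_j b_j x_j^k) y^n) = 0 for some t. *)
Definition cech_y (x : seq R) : R := \prod_(i < size x) x`_i.

Definition cech_top_zero (x : seq R) (a : R) (n : nat) : Prop :=
  exists (k t : nat) (b : nat -> R),
    cech_y x ^+ t * (a * cech_y x ^+ k
      - (\sum_(j < size x) b j * x`_j ^+ k) * cech_y x ^+ n) = 0.

(* H^l_x(R)_P <> 0 : some element h of H^l_x(R) has h/1 <> 0 in the localization,
   i.e. s h <> 0 for every s notin P. *)
Definition cech_top_loc_nonzero (x : seq R) (P : R -> Prop) : Prop :=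
  exists (a : R) (n : nat), forall s : R, ~ P s -> ~ cech_top_zero x (s * a) n.

Definition parameter_seq (x : seq R) : Prop :=
  x = [::] \/
  [/\ weakly_proregular x, ~ in_ideal x 1 &
      forall P : R -> Prop, prime_ideal P ->
        (forall a, in_ideal x a -> P a) -> cech_top_loc_nonzero x P].

Definition strong_parameter_seq (x : seq R) : Prop :=
  forall i : nat, (1 <= i <= size x)%N -> parameter_seq (take i x).

Definition regular_seq (x : seq R) : Prop :=
  (forall i : nat, (i < size x)%N ->
     forall r : R, in_ideal (take i x) (x`_i * r) -> in_ideal (take i x) r)
  /\ ~ in_ideal x 1.

Definition cohen_macaulay : Prop :=
  forall x : seq R, strong_parameter_seq x -> regular_seq x.

End Defs.

(* ---------- tensor products and (faithful) flatness ----------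
   For an R-module M and a ring map f : R -> S (S an R-module via f), M (x)_R S is
   the free abelian group on M x S modulo the subgroup generated by the
   bilinearity and balancing relations.  An element of the free abelian group is
   a formal sum t : seq (int * (M * S)); its coefficient at p is tcoef t p. *)
Section Tensor.
Variables (R S : comPzRingType) (f : {rmorphism R -> S}).

Definition tcoef (M : lmodType R) (t : seq (int * (M * S))) (p : M * S) : int :=
  \sum_(u <- t | u.2 == p) u.1.

Inductive trel (M : lmodType R) : Type :=
  | RaddL of M & M & S
  | RaddR of M & S & S
  | Rbal of R & M & S.

Definition trel_expand (M : lmodType R) (g : trel M) : seq (int * (M * S)) :=
  match g with
  | RaddL m m' s => [:: (1%:Z, (m + m', s)); (-1, (m, s)); (-1, (m', s))]
  | RaddR m s s' => [:: (1%:Z, (m, s + s')); (-1, (m, s)); (-1, (m, s'))]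
  | Rbal r m s => [:: (1%:Z, (r *: m, s)); (-1, (m, f r * s))]
  end.

Definition tensor_zero (M : lmodType R) (t : seq (int * (M * S))) : Prop :=
  exists rs : seq (int * trel M),
    forall p, tcoef t p = \sum_(u <- rs) u.1 * tcoef (trel_expand u.2) p.

Definition flat_map : Prop :=
  forall (M N : lmodType R) (g : M -> N),
    (forall a b, g (a + b) = g a + g b) -> (forall r a, g (r *: a) = r *: g a) ->
    injective g ->
    forall t : seq (int * (M * S)),
      tensor_zero [seq (u.1, (g u.2.1, u.2.2)) | u <- t] -> tensor_zero t.

Definition faithfully_flat : Prop :=
  flat_map /\
  forall M : lmodType R, (forall t : seq (int * (M * S)), tensor_zero t) ->
    forall m : M, m = 0.

End Tensor.

(* Faithful flatness lets both halves of the Cohen-Macaulay condition travel along f.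
   Flatness, through the equational criterion (an S-solution of a linear system with
   coefficients in R is an S-combination of images of R-solutions), shows that cycles of
   K(x^m) (x) S and relations witnessing the vanishing of a class of H^l_x(S) come from R;
   hence weak proregularity and the nonvanishing of the localized top Cech cohomology pass
   from x to f(x), and strong parameter sequences of R map to strong parameter sequences
   of S.  Faithfulness, applied to the module R/((x) : r), gives (x)S \cap R = (x)R, so
   regularity of f(x) on S descends to regularity of x on R. *)

From HB Require Import structures.
From mathcomp Require Import all_boot all_order all_algebra.
From mathcomp Require Import ring boolp.
Set Implicit Arguments. Unset Strict Implicit. Unset Printing Implicit Defensive.
Import GRing.Theory.
Local Open Scope ring_scope.

Section FormalTensor.
Variables (R S : comPzRingType) (f : {rmorphism R -> S}) (M : lmodType R).

Definition tnull (F : M * S -> int) : Prop :=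
  exists rs : seq (int * trel S M),
    forall p, F p = \sum_(u <- rs) u.1 * tcoef (trel_expand f u.2) p.

Definition teqv (F G : M * S -> int) : Prop := tnull (fun p => F p - G p).

Definition tpure (m : M) (s : S) (p : M * S) : int := (p == (m, s))%:R.

Lemma tnull0 : tnull (fun _ => 0).
Proof. by exists [::] => p; rewrite big_nil. Qed.

Lemma tnullD F G : tnull F -> tnull G -> tnull (fun p => F p + G p).
Proof. by move=> [r1 h1] [r2 h2]; exists (r1 ++ r2) => p; rewrite big_cat h1 h2. Qed.

Lemma tnullMz (z : int) F : tnull F -> tnull (fun p => z * F p).
Proof.
move=> [r h]; exists [seq (z * u.1, u.2) | u <- r] => p.
by rewrite big_map h mulr_sumr; apply: eq_bigr => u _; rewrite mulrA.
Qed.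

Lemma eq_tnull F G : F =1 G -> tnull F -> tnull G.
Proof. by move=> eFG [r h]; exists r => p; rewrite -eFG. Qed.

Lemma tnull_trel g : tnull (tcoef (trel_expand f g)).
Proof. by exists [:: (1, g)] => p; rewrite big_seq1 mul1r. Qed.

Lemma teqv_refl F : teqv F F.
Proof. by apply: eq_tnull tnull0 => p; rewrite subrr. Qed.

Lemma teqv_sym F G : teqv F G -> teqv G F.
Proof. by move=> h; apply: eq_tnull (tnullMz (-1) h) => p; rewrite mulN1r opprB. Qed.

Lemma teqv_trans F G H : teqv F G -> teqv G H -> teqv F H.
Proof. by move=> h1 h2; apply: eq_tnull (tnullD h1 h2) => p; rewrite addrA subrK. Qed.

Lemma teqvD F1 G1 F2 G2 : teqv F1 G1 -> teqv F2 G2 ->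
  teqv (fun p => F1 p + F2 p) (fun p => G1 p + G2 p).
Proof. by move=> h1 h2; apply: eq_tnull (tnullD h1 h2) => p; rewrite opprD addrACA. Qed.

Lemma teqv_tnull F G : teqv F G -> tnull G -> tnull F.
Proof. by move=> h1 h2; apply: eq_tnull (tnullD h1 h2) => p; rewrite subrK. Qed.

Lemma teqv_sum (I : eqType) (r : seq I) (F G : I -> M * S -> int) :
  (forall i, i \in r -> teqv (F i) (G i)) ->
  teqv (fun p => \sum_(i <- r) F i p) (fun p => \sum_(i <- r) G i p).
Proof.
elim: r => [|i r IH] h; first by apply: eq_tnull tnull0 => p; rewrite !big_nil subrr.
have hr j : j \in r -> teqv (F j) (G j) by move=> jr; apply: h; rewrite inE jr orbT.
by apply: eq_tnull (teqvD (h i (mem_head _ _)) (IH hr)) => p; rewrite !big_cons.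
Qed.

Lemma tnull_sum (I : eqType) (r : seq I) (F : I -> M * S -> int) :
  (forall i, i \in r -> tnull (F i)) -> tnull (fun p => \sum_(i <- r) F i p).
Proof.
move=> h; apply: teqv_tnull (teqv_sum (G := fun _ _ => 0) _) _.
  by move=> i /h; apply: eq_tnull => p; rewrite subr0.
by apply: eq_tnull tnull0 => p; rewrite big1.
Qed.

Lemma tcoefE t p : tcoef t p = \sum_(u <- t) u.1 * tpure u.2.1 u.2.2 p.
Proof.
rewrite /tcoef big_mkcond; apply: eq_bigr => -[z [m s]] _ /=.
by rewrite /tpure eq_sym; case: eqP; rewrite ?mulr1 ?mulr0.
Qed.

Lemma tensor_zeroE t :
  tensor_zero f t <-> tnull (fun p => \sum_(u <- t) u.1 * tpure u.2.1 u.2.2 p).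
Proof. by split=> -[rs h]; exists rs => p; rewrite -h tcoefE. Qed.

Lemma tpureDl m m' s : teqv (tpure (m + m') s) (fun p => tpure m s p + tpure m' s p).
Proof.
apply: eq_tnull (tnull_trel (RaddL m m' s)) => p.
by rewrite tcoefE !big_cons big_nil /= !mul1r !mulN1r addr0 opprD addrA.
Qed.

Lemma tpureDr m s s' : teqv (tpure m (s + s')) (fun p => tpure m s p + tpure m s' p).
Proof.
apply: eq_tnull (tnull_trel (RaddR m s s')) => p.
by rewrite tcoefE !big_cons big_nil /= !mul1r !mulN1r addr0 opprD addrA.
Qed.

Lemma tpureZ r m s : teqv (tpure (r *: m) s) (tpure m (f r * s)).
Proof.
apply: eq_tnull (tnull_trel (Rbal r m s)) => p.
by rewrite tcoefE !big_cons big_nil /= !mul1r !mulN1r addr0.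
Qed.

Lemma tnull_pure0l s : tnull (tpure 0 s).
Proof.
apply: eq_tnull (tnullMz (-1) (tpureDl 0 0 s)) => p.
by rewrite addr0 opprD addrA subrr add0r mulN1r opprK.
Qed.

Lemma tnull_pure0r m : tnull (tpure m 0).
Proof.
apply: eq_tnull (tnullMz (-1) (tpureDr m 0 0)) => p.
by rewrite addr0 opprD addrA subrr add0r mulN1r opprK.
Qed.

Lemma tpure_suml (I : Type) (r : seq I) (F : I -> M) s :
  teqv (tpure (\sum_(i <- r) F i) s) (fun p => \sum_(i <- r) tpure (F i) s p).
Proof.
elim: r => [|i r IH].
  by apply: eq_tnull (tnull_pure0l s) => p; rewrite !big_nil subr0.
rewrite big_cons; apply: teqv_trans (tpureDl _ _ _) _.
by apply: eq_tnull (teqvD (teqv_refl (tpure (F i) s)) IH) => p; rewrite big_cons.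
Qed.

Lemma tpure_sumr (I : Type) (r : seq I) m (F : I -> S) :
  teqv (tpure m (\sum_(i <- r) F i)) (fun p => \sum_(i <- r) tpure m (F i) p).
Proof.
elim: r => [|i r IH].
  by apply: eq_tnull (tnull_pure0r m) => p; rewrite !big_nil subr0.
rewrite big_cons; apply: teqv_trans (tpureDr _ _ _) _.
by apply: eq_tnull (teqvD (teqv_refl (tpure m (F i))) IH) => p; rewrite big_cons.
Qed.

Section Evaluation.
Variables (V : zmodType) (phi : M * S -> V).

Definition teval (t : seq (int * (M * S))) : V := \sum_(u <- t) phi u.2 *~ u.1.

Lemma teval_tcoef (L : seq (M * S)) t : uniq L -> {subset map snd t <= L} ->
  teval t = \sum_(p <- L) phi p *~ tcoef t p.
Proof.
move=> uL; elim: t => [|u t IH] tL.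
  by rewrite /teval big_nil big1 // => p _; rewrite /tcoef big_nil mulr0z.
have uL2 : u.2 \in L by apply: tL; rewrite inE eqxx.
rewrite /teval big_cons -/(teval t) IH; last by move=> p pt; apply: tL; rewrite inE pt orbT.
rewrite /tcoef; under [RHS]eq_bigr => p _ do rewrite big_cons.
rewrite (bigD1_seq u.2) //= [in RHS](bigD1_seq u.2) //= eqxx mulrzDr addrA.
by congr (_ + _); apply: eq_bigr => p /negbTE up; rewrite eq_sym up.
Qed.

Lemma eq_teval t1 t2 : tcoef t1 =1 tcoef t2 -> teval t1 = teval t2.
Proof.
move=> e12; pose L := undup (map snd (t1 ++ t2)).
have sub12 (t : seq (int * (M * S))) : {subset t <= t1 ++ t2} -> {subset map snd t <= L}.
  by move=> tt12 p /mapP[u /tt12 ut ->]; rewrite mem_undup map_f.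
rewrite (@teval_tcoef L t1) ?(@teval_tcoef L t2) ?undup_uniq //.
- by apply: eq_bigr => p _; rewrite e12.
- by apply: sub12 => u ut; rewrite mem_cat ut orbT.
- by apply: sub12 => u ut; rewrite mem_cat ut.
Qed.

(* [phi] need not be biadditive or balanced: it suffices that relations evaluate into [W]. *)
Lemma teval_tensor_zero (W : zmodClosed V) t : tensor_zero f t ->
  (forall g, teval (trel_expand f g) \in W) -> teval t \in W.
Proof.
move=> [rs h] hW.
pose t' := flatten [seq [seq (u.1 * w.1, w.2) | w <- trel_expand f u.2] | u <- rs].
have -> : teval t = teval t'.
  apply: eq_teval => p; rewrite h /tcoef /t'.
  elim: rs {h t'} => [|u rs IH]; first by rewrite !big_nil.
  by rewrite big_cons /= big_cat IH big_map mulr_sumr.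
rewrite /teval /t' big_flatten big_map /=; apply: rpred_sum => u _.
rewrite big_map (eq_bigr (fun w => (phi w.2 *~ w.1) *~ u.1)) -?mulrz_suml.
  by apply: rpredMz; apply: hW.
by move=> w _ /=; rewrite mulrC mulrzA.
Qed.

End Evaluation.
End FormalTensor.

Section EquationalCriterion.
Variables (R S : comPzRingType) (f : {rmorphism R -> S}).
Hypothesis flat : flat_map f.
Variables (I E : finType) (a : E -> I -> R).

Definition solution (u : I -> R) : Prop := forall e, \sum_i a e i * u i = 0.

Definition eval_system (u : I -> R) : {ffun E -> R^o} := [ffun e => \sum_i a e i * u i].

Lemma eval_systemD u v :
  eval_system (fun i => u i + v i) = eval_system u + eval_system v.
Proof.
by apply/ffunP => e; rewrite !ffunE -big_split; apply: eq_bigr => i _; rewrite mulrDr.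
Qed.

Lemma eval_systemZ c u : eval_system (fun i => c * u i) = c *: eval_system u.
Proof.
apply/ffunP => e; rewrite !ffunE -[c *: _]/(c * _ : R) mulr_sumr.
by apply: eq_bigr => i _; rewrite mulrCA.
Qed.

Definition system_image : pred {ffun E -> R^o} :=
  fun w => `[< exists u, w = eval_system u >].

Lemma system_image_submod_closed : submod_closed system_image.
Proof.
split.
  apply/asboolP; exists (fun _ => 0); apply/ffunP => e.
  by rewrite !ffunE big1 // => i _; rewrite mulr0.
move=> c _ _ /asboolP[u ->] /asboolP[v ->]; apply/asboolP.
by exists (fun i => c * u i + v i); rewrite eval_systemD eval_systemZ.
Qed.

HB.instance Definition _ :=
  GRing.isSubmodClosed.Build R {ffun E -> R^o} system_image system_image_submod_closed.

Record image_type := ImageElt { image_val :> {ffun E -> R^o}; _ : image_val \in system_image }.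
HB.instance Definition _ := [isSub for image_val].
HB.instance Definition _ := [Choice of image_type by <:].
HB.instance Definition _ := [SubChoice_isSubLmodule of image_type by <:].

Lemma image_eltP (m : image_type) : exists u, val m = eval_system u.
Proof. by apply/asboolP; case: m. Qed.

Definition preimage (m : image_type) : I -> R := sval (cid (image_eltP m)).

Lemma preimageP m : val m = eval_system (preimage m).
Proof. by rewrite /preimage; case: cid. Qed.

Lemma solution_preimage m u : val m = eval_system u ->
  solution (fun i => preimage m i - u i).
Proof.
move=> mu e; have /ffunP/(_ e) := etrans (esym (preimageP m)) mu; rewrite !ffunE.
by move=> eq_mu; rewrite (eq_bigr _ (fun i _ => mulrBr _ _ _)) sumrB eq_mu subrr.
Qed.

Definition base_solution (c : S) (u : I -> R) : {ffun I -> S} := [ffun i => c * f (u i)].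

Definition solution_span : pred {ffun I -> S} :=
  fun w => `[< exists2 cs : seq (S * {ffun I -> R}),
                 forall c, c \in cs -> solution c.2 &
                 w = \sum_(c <- cs) base_solution c.1 c.2 >].

Lemma solution_span_zmod_closed : zmod_closed solution_span.
Proof.
split; first by apply/asboolP; exists [::]; rewrite ?big_nil.
move=> _ _ /asboolP[cs1 sol1 ->] /asboolP[cs2 sol2 ->]; apply/asboolP.
exists (cs1 ++ [seq (- c.1, c.2) | c <- cs2]).
  by move=> c; rewrite mem_cat => /orP[/sol1 //|/mapP[c' /sol2 ? ->]].
rewrite big_cat big_map -sumrN; congr (_ + _); apply: eq_bigr => c _.
by apply/ffunP => i; rewrite !ffunE mulNr.
Qed.

HB.instance Definition _ :=
  GRing.isZmodClosed.Build {ffun I -> S} solution_span solution_span_zmod_closed.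

Lemma base_solution_span c u : solution u -> base_solution c u \in solution_span.
Proof.
move=> sol_u; apply/asboolP; exists [:: (c, [ffun i => u i])]; last first.
  by rewrite big_seq1; apply/ffunP => i; rewrite !ffunE.
move=> _ /[1!inE] /eqP -> e /=.
by under eq_bigr => i _ do rewrite ffunE; apply: sol_u.
Qed.

Definition tensor_to_span (p : image_type * S) : {ffun I -> S} :=
  base_solution p.2 (preimage p.1).

Lemma teval_trel_span g : teval tensor_to_span (trel_expand f g) \in solution_span.
Proof.
have span_eq w c u : solution u -> w = base_solution c u -> w \in solution_span.
  by move=> /(base_solution_span c) + ->.
case: g => [m m' s|m s s'|r m s]; rewrite /teval !big_cons big_nil /= addr0.
- have sol : solution (fun i => preimage (m + m') i - (preimage m i + preimage m' i)).
    by apply: solution_preimage; rewrite raddfD /= !preimageP eval_systemD.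
  apply: (span_eq _ s _ sol); apply/ffunP => i.
  by rewrite !ffunE /= rmorphB rmorphD /= mulrBr mulrDr opprD.
- rewrite (_ : _ + _ = 0) ?rpred0 //; apply/ffunP => i; rewrite !ffunE /=.
  by rewrite mulrDl -opprD subrr.
- have sol : solution (fun i => preimage (r *: m) i - r * preimage m i).
    by apply: solution_preimage; rewrite linearZ /= !preimageP eval_systemZ.
  apply: (span_eq _ s _ sol); apply/ffunP => i.
  by rewrite !ffunE /= rmorphB rmorphM /= mulrBr mulrA [s * f r]mulrC.
Qed.

Definition unit_vector (e : E) : {ffun E -> R^o} := [ffun e' => (e == e')%:R].

Lemma column_in_image i : eval_system (fun j => (i == j)%:R) \in system_image.
Proof. by apply/asboolP; exists (fun j => (i == j)%:R). Qed.

Definition column (i : I) : image_type := ImageElt (column_in_image i).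

Lemma columnE i : val (column i) = \sum_e a e i *: unit_vector e.
Proof.
apply/ffunP => e'; rewrite !ffunE sum_ffunE (bigD1 i) //= eqxx mulr1.
rewrite big1 ?addr0 => [|j /negbTE]; last by rewrite eq_sym => ->; rewrite mulr0.
rewrite (bigD1 e') //= big1 => [|e /negbTE ne]; rewrite !ffunE ?eqxx ?ne.
  by rewrite -[_ *: _]/(_ * _ : R) mulr1 addr0.
by rewrite -[_ *: _]/(_ * _ : R) mulr0.
Qed.

Section Columns.
Variable v : I -> S.
Hypothesis v_sol : forall e, \sum_i f (a e i) * v i = 0.

Definition column_tensor : seq (int * (image_type * S)) :=
  [seq (1, (column i, v i)) | i <- index_enum I].

(* In R^E (x) S, sum_i col_i (x) v_i = sum_e e_e (x) (sum_i f(a e i) v_i) = 0; flatness moves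
   this to the image of the system, a submodule of R^E. *)
Lemma column_tensor_zero_ambient :
  tensor_zero f [seq (u.1, (val u.2.1, u.2.2)) | u <- column_tensor].
Proof.
apply/tensor_zeroE.
apply: (@eq_tnull _ _ f _ (fun p => \sum_i tpure (val (column i)) (v i) p)).
  by move=> p; rewrite !big_map; apply: eq_bigr => i _; rewrite mul1r.
apply: (@teqv_tnull _ _ f _ _
  (fun p => \sum_i \sum_e tpure (unit_vector e) (f (a e i) * v i) p)).
  apply: teqv_sum => i _; rewrite columnE; apply: teqv_trans (tpure_suml _ _ _ _) _.
  by apply: teqv_sum => e _; apply: tpureZ.
apply: (@eq_tnull _ _ f _ (fun p => \sum_e \sum_i tpure (unit_vector e) (f (a e i) * v i) p)).
  by move=> p; rewrite exchange_big.
apply: tnull_sum => e _; apply: teqv_tnull (teqv_sym (tpure_sumr _ _ _ _)) _.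
by rewrite v_sol; apply: tnull_pure0r.
Qed.

Lemma column_tensor_zero : tensor_zero f column_tensor.
Proof. by apply: (flat (g := val)) column_tensor_zero_ambient => //; apply: val_inj. Qed.

Lemma column_solution_span : [ffun i => v i] \in solution_span.
Proof.
have -> : [ffun i => v i] = teval tensor_to_span column_tensor -
    \sum_i base_solution (v i) (fun j => preimage (column i) j - (i == j)%:R).
  apply/ffunP => j; rewrite /teval big_map !ffunE /= !sum_ffunE -sumrB.
  under eq_bigr => i _ do rewrite ffunMzE mulr1z !ffunE rmorphB /= mulrBr opprB addrC subrK.
  rewrite (bigD1 j) //= eqxx rmorph1 mulr1 big1 ?addr0 // => i /negbTE ne.
  by rewrite ne rmorph0 mulr0.
rewrite rpredB ?(teval_tensor_zero column_tensor_zero teval_trel_span) //.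
by apply: rpred_sum => i _; apply/base_solution_span/solution_preimage.
Qed.

End Columns.

Lemma flat_equational_criterion (v : I -> S) : (forall e, \sum_i f (a e i) * v i = 0) ->
  exists2 cs : seq (S * {ffun I -> R}), forall c, c \in cs -> solution c.2 &
    forall i, v i = \sum_(c <- cs) c.1 * f (c.2 i).
Proof.
move=> /column_solution_span/asboolP[cs sol_cs span_v]; exists cs => // i.
have /ffunP/(_ i) := span_v; rewrite ffunE sum_ffunE => ->.
by apply: eq_bigr => c _; rewrite ffunE.
Qed.

End EquationalCriterion.

Section IdealQuotient.
Import Quotient.
Local Open Scope quotient_scope.
Variables (R : comPzRingType) (J : zmodClosed R).
Hypothesis J_mull : forall r a, a \in J -> r * a \in J.

Local Notation Q := {quot J}.

Definition quot_scale (r : R) : Q -> Q := lift_op1 Q ( *%R r).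

Lemma pi_scale r a : quot_scale r (\pi_Q a) = \pi_Q (r * a).
Proof.
by unlock quot_scale; apply/eqP; rewrite -idealrBE -mulrBr J_mull // idealrBE reprK.
Qed.

Lemma quot_scaleA r r' x : quot_scale r (quot_scale r' x) = quot_scale (r * r') x.
Proof. by elim/quotW: x => a; rewrite !pi_scale mulrA. Qed.

Lemma quot_scale1 : left_id 1 quot_scale.
Proof. by elim/quotW=> a; rewrite pi_scale mul1r. Qed.

Lemma quot_scaleDr : right_distributive quot_scale +%R.
Proof.
by move=> r; elim/quotW=> a; elim/quotW=> b; rewrite -raddfD !pi_scale -raddfD mulrDr.
Qed.

Lemma quot_scaleDl x : {morph quot_scale^~ x : r r' / r + r'}.
Proof. by elim/quotW: x => a r r'; rewrite !pi_scale -raddfD mulrDl. Qed.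

HB.instance Definition _ :=
  GRing.Zmodule_isLmodule.Build R Q quot_scaleA quot_scale1 quot_scaleDr quot_scaleDl.

Lemma pi_quot_eq0 a : (\pi_Q a == 0) = (a \in J).
Proof. by rewrite -(raddf0 \pi_Q) -idealrBE subr0. Qed.

Lemma quot_scale_ideal r (x : Q) : r \in J -> r *: x = 0.
Proof.
by elim/quotW: x => a Jr; apply/eqP; rewrite [_ *: _]pi_scale pi_quot_eq0 mulrC J_mull.
Qed.

End IdealQuotient.

Lemma faithfully_flat_unit_ideal (R S : comPzRingType) (f : {rmorphism R -> S})
    (J : zmodClosed R) : faithfully_flat f -> (forall r a, a \in J -> r * a \in J) ->
  forall cs : seq (S * R), (forall c, c \in cs -> c.2 \in J) ->
  \sum_(c <- cs) c.1 * f c.2 = 1 -> 1 \in J.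
Proof.
move=> [_ ff] J_mull cs J_cs sum1.
rewrite -(pi_quot_eq0 J); apply/eqP/ff => t; apply/tensor_zeroE.
have pure0 (m : Quotient.quot J) s : tnull f (tpure m s).
  rewrite -[s]mul1r -sum1 mulr_suml.
  apply: teqv_tnull (tpure_sumr _ _ _ _) _; apply: tnull_sum => c /J_cs Jc.
  rewrite -mulrA mulrCA; apply: teqv_tnull (teqv_sym (tpureZ _ _ _ _)) _.
  by rewrite quot_scale_ideal //; apply: tnull_pure0l.
by apply: tnull_sum => u _; apply: tnullMz.
Qed.

Lemma sum_option (V : nmodType) (T : finType) (F : option T -> V) :
  \sum_(i : option T) F i = F None + \sum_i F (Some i).
Proof.
rewrite (bigD1 None) //=; congr (_ + _).
rewrite (reindex_omap Some (fun o => o)) //=; last by case.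
by apply: eq_bigl => j; rewrite eqxx.
Qed.

Definition coef_of_option (V : nmodType) n (u : option 'I_n -> V) (k : nat) : V :=
  if insub k is Some j then u (Some j) else 0.

Lemma coef_of_optionE (V : nmodType) n (u : option 'I_n -> V) (i : 'I_n) :
  coef_of_option u i = u (Some i).
Proof. by rewrite /coef_of_option valK. Qed.

Section Ideals.
Variable R : comPzRingType.
Implicit Types (s : seq R) (a b r : R).

Lemma in_ideal0 s : in_ideal s 0.
Proof. by exists (fun=> 0); rewrite big1 // => i _; rewrite mul0r. Qed.

Lemma in_idealB s a b : in_ideal s a -> in_ideal s b -> in_ideal s (a - b).
Proof.
move=> [c ->] [d ->]; exists (fun i => c i - d i).
by rewrite -sumrB; apply: eq_bigr => i _; rewrite mulrBl.
Qed.

Lemma in_idealMl s r a : in_ideal s a -> in_ideal s (r * a).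
Proof.
move=> [c ->]; exists (fun i => r * c i).
by rewrite mulr_sumr; apply: eq_bigr => i _; rewrite mulrA.
Qed.

Section Colon.
Variables (s : seq R) (r : R).

Definition colon_ideal : pred R := fun b => `[< in_ideal s (b * r) >].

Lemma colon_ideal_zmod_closed : zmod_closed colon_ideal.
Proof.
split; first by apply/asboolP; rewrite mul0r; apply: in_ideal0.
by move=> a b /asboolP ? /asboolP ?; apply/asboolP; rewrite mulrBl; apply: in_idealB.
Qed.

HB.instance Definition _ :=
  GRing.isZmodClosed.Build R colon_ideal colon_ideal_zmod_closed.

Lemma colon_ideal_mull b a : a \in colon_ideal -> b * a \in colon_ideal.
Proof. by move=> /asboolP ?; apply/asboolP; rewrite -mulrA; apply: in_idealMl. Qed.

End Colon.

End Ideals.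

Section RingMap.
Variables (R S : comPzRingType) (f : {rmorphism R -> S}).

Lemma nth_map_rmorph (s : seq R) i : (map f s)`_i = f s`_i.
Proof.
case: (ltnP i (size s)) => h; first by rewrite (nth_map 0).
by rewrite !nth_default ?size_map // rmorph0.
Qed.

Lemma in_ideal_map (s : seq R) a : in_ideal s a -> in_ideal (map f s) (f a).
Proof.
move=> [c ->]; exists (fun i => f (c i)); rewrite rmorph_sum size_map.
by apply: eq_bigr => i _; rewrite rmorphM nth_map_rmorph.
Qed.

Hypothesis ffl : faithfully_flat f.

Lemma in_ideal_of_map (s : seq R) r : in_ideal (map f s) (f r) -> in_ideal s r.
Proof.
move=> [c cP]; rewrite size_map in cP.
pose a (_ : unit) (i : option 'I_(size s)) := if i is Some j then - s`_j else r.
pose v (i : option 'I_(size s)) := if i is Some j then c j else 1.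
have v_sol e : \sum_i f (a e i) * v i = 0.
  rewrite sum_option /= mulr1 cP -big_split big1 // => i _ /=.
  by rewrite rmorphN nth_map_rmorph mulNr mulrC subrr.
have [cs cs_sol v_span] := flat_equational_criterion (proj1 ffl) v_sol.
suff /asboolP : 1 \in colon_ideal s r by rewrite mul1r.
apply: (faithfully_flat_unit_ideal ffl (@colon_ideal_mull _ s r)
  (cs := [seq (d.1, d.2 None) | d : S * {ffun _ -> R} <- cs])); last first.
  by rewrite big_map -(v_span None).
move=> _ /mapP[d /cs_sol d_sol ->] /=; apply/asboolP; exists (coef_of_option d.2).
have := d_sol tt; rewrite sum_option /= => /eqP; rewrite mulrC addr_eq0 => /eqP ->.
by rewrite -sumrN; apply: eq_bigr => i _; rewrite coef_of_optionE mulNr mulrC opprK.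
Qed.

End RingMap.

Section KoszulCycles.
Variables (T : comPzRingType) (l : nat) (y : seq T) (i : nat).

Definition kbasis (I I' : {set 'I_l}) : T := (I' == I)%:R.

Lemma sum_kbasis (u : {set 'I_l} -> T) K : \sum_I kbasis I K * u I = u K.
Proof.
rewrite (bigD1 K) //= big1 ?addr0 => [|I /negbTE nIK]; first by rewrite /kbasis eqxx mul1r.
by rewrite /kbasis eq_sym nIK mul0r.
Qed.

Lemma kdiff_kbasis (u : {set 'I_l} -> T) J : \sum_I kdiff y (kbasis I) J * u I = kdiff y u J.
Proof.
rewrite /kdiff; under eq_bigr => I _ do rewrite mulr_suml.
rewrite exchange_big /=; apply: eq_bigr => j _.
by rewrite -sum_kbasis mulr_sumr; apply: eq_bigr => I _; rewrite mulrA.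
Qed.

Lemma kdiff_linear a (u w : {set 'I_l} -> T) J :
  kdiff y (fun I => a * u I + w I) J = a * kdiff y u J + kdiff y w J.
Proof. by rewrite /kdiff mulr_sumr -big_split /=; apply: eq_bigr => j _; ring. Qed.

Definition koszul_cycle_system (e : {set 'I_l} + {set 'I_l}) (I : {set 'I_l}) : T :=
  match e with
  | inl J => kdiff y (kbasis I) J
  | inr K => (#|K| != i)%:R * kbasis I K
  end.

Lemma koszul_cycle_systemP (u : {set 'I_l} -> T) :
  (forall e, \sum_I koszul_cycle_system e I * u I = 0) <->
  homog i u /\ forall J, kdiff y u J = 0.
Proof.
have eqnE K : \sum_I koszul_cycle_system (inr K) I * u I = (#|K| != i)%:R * u K.
  by under eq_bigr do rewrite -mulrA; rewrite -mulr_sumr sum_kbasis.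
split=> [u_sol | [u_homog u_cyc] [J|K]].
- split=> [K nK|J]; last by rewrite -kdiff_kbasis; apply: u_sol (inl J).
  by have := u_sol (inr K); rewrite eqnE nK mul1r.
- exact: etrans (kdiff_kbasis u J) (u_cyc J).
- by rewrite eqnE; case: eqP => [_|/eqP /u_homog ->]; rewrite ?mul0r ?mulr0.
Qed.

End KoszulCycles.

(* [weakly_proregular x] is [weakly_proregular_on (size x) x]; freeing the index [l] avoids
   rewriting inside the dependent type 'I_(size x). *)
Definition weakly_proregular_on (T : comPzRingType) (l : nat) (x : seq T) : Prop :=
  forall n : nat, exists m : nat, (n <= m)%N /\
    forall i : nat, (1 <= i)%N ->
    forall z : {set 'I_l} -> T, homog i z ->
      (forall J, kdiff (spow x m) z J = 0) ->
      exists w : {set 'I_l} -> T, homog i.+1 w /\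
        forall J, kdiff (spow x n) w J = kmap x (m - n) z J.

Section KoszulBaseChange.
Variables (R S : comPzRingType) (f : {rmorphism R -> S}).

Lemma spow_map (x : seq R) m : spow (map f x) m = map f (spow x m).
Proof. by rewrite /spow -!map_comp; apply: eq_map => b /=; rewrite rmorphXn. Qed.

Lemma kdiff_rmorph l (y : seq R) (u : {set 'I_l} -> R) J :
  kdiff (map f y) (f \o u) J = f (kdiff y u J).
Proof.
rewrite /kdiff rmorph_sum; apply: eq_bigr => j _.
by rewrite !rmorphM rmorphXn rmorphN1 nth_map_rmorph.
Qed.

Lemma kmap_rmorph l (x : seq R) k (u : {set 'I_l} -> R) J :
  kmap (map f x) k (f \o u) J = f (kmap x k u J).
Proof.
rewrite /kmap rmorphM rmorph_prod; congr (_ * _); apply: eq_bigr => j _.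
by rewrite rmorphXn nth_map_rmorph.
Qed.

Lemma koszul_cycle_system_rmorph l (y : seq R) i e I :
  f (koszul_cycle_system y i e I) = koszul_cycle_system (map f y) i e (I : {set 'I_l}).
Proof.
have kbasis_rmorph I' : f (kbasis R I I') = kbasis S I I' by rewrite rmorph_nat.
case: e => [J|K] /=; last by rewrite rmorphM rmorph_nat kbasis_rmorph.
by rewrite -kdiff_rmorph; congr kdiff; apply/funext => I' /=.
Qed.

Hypothesis flat : flat_map f.

Lemma flat_koszul_cycle_span l (y : seq R) i (z : {set 'I_l} -> S) :
  homog i z -> (forall J, kdiff (map f y) z J = 0) ->
  exists2 cs : seq (S * {ffun {set 'I_l} -> R}),
    forall c, c \in cs -> homog i c.2 /\ forall J, kdiff y c.2 J = 0 &
    z = fun I => \sum_(c <- cs) c.1 * f (c.2 I).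
Proof.
move=> z_homog z_cyc.
have [|cs cs_sol z_span] :=
  @flat_equational_criterion _ _ f flat _ _ (koszul_cycle_system y i) z.
  move=> e; under eq_bigr do rewrite koszul_cycle_system_rmorph.
  by move: e; apply/koszul_cycle_systemP.
by exists cs => [c /cs_sol /koszul_cycle_systemP|]; last by apply/funext.
Qed.

Lemma weakly_proregular_on_map l (x : seq R) :
  weakly_proregular_on l x -> weakly_proregular_on l (map f x).
Proof.
move=> x_wpr n; have [m [le_nm lift]] := x_wpr n; exists m; split=> // i i_ge1 z z_homog.
rewrite spow_map => /(flat_koszul_cycle_span z_homog)[cs cs_cyc ->] {z z_homog}.
elim: cs cs_cyc => [_|c cs IH cs_cyc].
  exists (fun=> 0); split=> // J.
  by rewrite /kdiff /kmap big_nil mulr0 big1 // => j _; rewrite mulr0.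
have [d d_cs|w [w_homog w_bd]] := IH; first by apply: cs_cyc; rewrite inE d_cs orbT.
have [c_homog c_cyc] := cs_cyc c (mem_head _ _).
have [w0 [w0_homog w0_bd]] := lift i i_ge1 c.2 c_homog c_cyc.
exists (fun I => c.1 * f (w0 I) + w I); split.
  by move=> K nK; rewrite w0_homog // w_homog // rmorph0 mulr0 addr0.
move=> J; rewrite kdiff_linear w_bd spow_map (kdiff_rmorph _ w0) w0_bd -kmap_rmorph.
by rewrite /kmap big_cons /=; ring.
Qed.

End KoszulBaseChange.

Section CechBaseChange.
Variables (R S : comPzRingType) (f : {rmorphism R -> S}).

Lemma cech_y_rmorph (x : seq R) : cech_y (map f x) = f (cech_y x).
Proof.
rewrite /cech_y rmorph_prod size_map.
by apply: eq_bigr => i _; rewrite nth_map_rmorph.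
Qed.

Lemma prime_ideal_preimage (P : S -> Prop) : prime_ideal P -> prime_ideal (P \o f).
Proof.
case=> P0 PD PM P1 Pprime; split=> /= [|a b|r a||a b];
  rewrite ?rmorph0 ?rmorphD ?rmorphM ?rmorph1 //.
- exact: PD.
- exact: PM.
- exact: Pprime.
Qed.

Lemma prime_ideal_sum (P : S -> Prop) (I : eqType) (r : seq I) (F G : I -> S) :
  prime_ideal P -> (forall i, i \in r -> P (G i)) -> P (\sum_(i <- r) F i * G i).
Proof. by case=> P0 PD PM _ _ PG; rewrite big_seq; apply: big_ind => // i /PG; apply: PM. Qed.

Hypothesis flat : flat_map f.

Lemma flat_cech_top_zero_span (x : seq R) a n (s : S) :
  cech_top_zero (map f x) (s * f a) n ->
  exists2 cs : seq (S * R), forall c, c \in cs -> cech_top_zero x (c.2 * a) n &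
    s = \sum_(c <- cs) c.1 * f c.2.
Proof.
move=> [k [t [b]]]; rewrite cech_y_rmorph size_map; set y := cech_y x => sb0.
pose A (_ : unit) (i : option 'I_(size x)) := if i is Some j
  then - (y ^+ t * x`_j ^+ k * y ^+ n) else y ^+ t * a * y ^+ k.
pose v (i : option 'I_(size x)) := if i is Some j then b j else s.
have v_sol e : \sum_i f (A e i) * v i = 0.
  rewrite sum_option /= -[RHS]sb0 mulrBr mulr_suml mulr_sumr -sumrN.
  congr (_ + _); first by rewrite !rmorphM !rmorphXn; ring.
  by apply: eq_bigr => j _; rewrite nth_map_rmorph rmorphN !rmorphM !rmorphXn; ring.
have [cs cs_sol s_span] := flat_equational_criterion flat v_sol.
exists [seq (d.1, d.2 None) | d : S * {ffun _ -> R} <- cs]; last by rewrite big_map -s_span.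
move=> _ /mapP[d /cs_sol d_sol ->]; exists k, t, (coef_of_option d.2).
have := d_sol tt; rewrite sum_option /= => d0.
rewrite -[RHS]d0 mulrBr mulr_suml mulr_sumr -sumrN; congr (_ + _); first by ring.
by apply: eq_bigr => j _; rewrite coef_of_optionE; ring.
Qed.

Lemma cech_top_loc_nonzero_map (x : seq R) (P : S -> Prop) :
  prime_ideal P -> cech_top_loc_nonzero x (P \o f) -> cech_top_loc_nonzero (map f x) P.
Proof.
move=> P_prime [a [n a_nz]]; exists (f a), n => s Ns /flat_cech_top_zero_span[cs cs0 s_span].
apply: Ns; rewrite s_span; apply: prime_ideal_sum => // c /cs0 c0.
by case: (pselect (P (f c.2))) => // /a_nz.
Qed.

End CechBaseChange.

Section FaithfullyFlatDescent.
Variables (R S : comPzRingType) (f : {rmorphism R -> S}).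
Hypothesis ffl : faithfully_flat f.

Lemma parameter_seq_map (x : seq R) : parameter_seq x -> parameter_seq (map f x).
Proof.
case=> [->|[x_wpr x_proper x_cech]]; [by left | right; split].
- by have := weakly_proregular_on_map ffl.1 x_wpr; rewrite -(size_map f x).
- by rewrite -(rmorph1 f) => /(in_ideal_of_map ffl).
- move=> P P_prime P_x; apply: (cech_top_loc_nonzero_map ffl.1 P_prime).
  by apply: x_cech (prime_ideal_preimage f P_prime) _ => a /(in_ideal_map f) /P_x.
Qed.

Lemma strong_parameter_seq_map (x : seq R) :
  strong_parameter_seq x -> strong_parameter_seq (map f x).
Proof. by move=> x_sp i; rewrite size_map -map_take => /x_sp /parameter_seq_map. Qed.

Lemma regular_seq_of_map (x : seq R) : regular_seq (map f x) -> regular_seq x.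
Proof.
case=> fx_reg fx_proper; split=> [i lt_i r|]; last by move/(in_ideal_map f); rewrite rmorph1.
move=> /(in_ideal_map f); rewrite map_take rmorphM -nth_map_rmorph => /fx_reg.
by rewrite size_map -map_take => /(_ lt_i) /(in_ideal_of_map ffl).
Qed.

End FaithfullyFlatDescent.

Theorem proposition4p5 (R S : comPzRingType) (f : {rmorphism R -> S}) :
  faithfully_flat f -> cohen_macaulay S -> cohen_macaulay R.
Proof.
move=> ffl S_cm x /(strong_parameter_seq_map ffl) /S_cm.
exact: regular_seq_of_map.
Qed.
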